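(* Let $n\ge1$, $\mathbf y\in\mathbb R^n$, and let $(T_1,\dots,T_m)$ be a partition of $\{1,\dots,n\}$ into sets of consecutive integers, i.e. each $T_j=\{s_j,s_j+1,\dots,t_j\}$ for some $s_j\le t_j$. Then $$k\big(\Pi_{\mathcal S_n^\uparrow}(\mathbf y)\big)\le\sum_{j=1}^m k\big(\Pi_{\mathcal S^\uparrow_{|T_j|}}(\mathbf y_{T_j})\big).$$
   Context: $\mathcal S_m^\uparrow=\{\mathbf u\in\mathbb R^m:u_1\le\dots\le u_m\}$ ($\mathcal S_1^\uparrow=\mathbb R$); $\Pi_K$ is the Euclidean projection onto $K$. For $\mathbf v\in\mathbb R^n$ and $T=\{t_1<\dots<t_{|T|}\}\subseteq\{1,\dots,n\}$, $\mathbf v_T=(v_{t_1},\dots,v_{t_{|T|}})^T\in\mathbb R^{|T|}$. $k(\mathbf u)$ is the number of distinct coordinates of $\mathbf u$. *)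

(* Vectors in R^m are functions 'I_m -> R (coordinates 0..m-1). *)
From HB Require Import structures.
From mathcomp Require Import all_boot all_order all_algebra.
Set Implicit Arguments. Unset Strict Implicit. Unset Printing Implicit Defensive.
Import Order.TTheory GRing.Theory Num.Theory.
Local Open Scope ring_scope.

Definition monotone (R : realFieldType) (m : nat) (u : 'I_m -> R) : Prop :=
  forall i j : 'I_m, (i <= j)%N -> u i <= u j.

Definition sqdist (R : realFieldType) (m : nat) (u v : 'I_m -> R) : R :=
  \sum_(i < m) (u i - v i) ^+ 2.

Definition is_proj_mono (R : realFieldType) (m : nat) (y x : 'I_m -> R) : Prop :=
  monotone x /\ (forall z : 'I_m -> R, monotone z -> sqdist y x <= sqdist y z).

Definition kdist (R : realFieldType) (m : nat) (u : 'I_m -> R) : nat :=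
  size (undup (codom u)).

(* v_T : the coordinates of v indexed by T, in increasing order *)
Definition subvec (R : realFieldType) (n : nat) (v : 'I_n -> R) (T : {set 'I_n})
  : 'I_#|T| -> R := fun i => v (enum_val i).

Definition consecutive (n : nat) (T : {set 'I_n}) : Prop :=
  forall a b c : 'I_n, a \in T -> b \in T -> (a <= c)%N -> (c <= b)%N -> c \in T.
Arguments subvec {R n} v T _.

From HB Require Import structures.
From mathcomp Require Import all_boot all_order all_algebra.
From mathcomp Require Import ring lra.
Import Order.TTheory GRing.Theory Num.Theory.
Set Implicit Arguments. Unset Strict Implicit.
Local Open Scope ring_scope.

(* Let x = Pi(y) and, for a block T, w = Pi(y_T). Suppose x jumps inside T,
   x_a < x_(a+1), at block indices i, i+1. Then w_i <= x_a and
   x_(a+1) <= w_(i+1). For instance, if w_(i+1) < x_(a+1), raise w beyond i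
   by G = (mid - w)_+ with mid = (w_(i+1) + x_(a+1)) / 2, and lower x beyond a
   by c G with c small enough not to cross x_a. Both perturbations stay
   monotone, and adding the variational inequalities <y - x, z - x> <= 0 of
   the two projections gives sum_l (w_l - x_(T,l)) G_l >= 0, whereas each term
   is <= 0 and the term at i+1 is < 0. So equal adjacent coordinates of w
   force equal coordinates of x, x_T takes at most k(w) values, and the
   values of x are covered by those of its blocks. *)

Lemma proj_mono_variational_ineq (R : realFieldType) m (y x z : 'I_m -> R) :
  is_proj_mono y x -> monotone z -> \sum_i (y i - x i) * (z i - x i) <= 0.
Proof.
move=> [mx opt] mz.
set A := \sum_i (y i - x i) * (z i - x i).
set B := \sum_i (z i - x i) ^+ 2.
have B0 : 0 <= B by apply: sumr_ge0 => i _; exact: sqr_ge0.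
have dir_ineq t : 0 < t -> t <= 1 -> 2 * A <= t * B.
  move=> t0 t1.
  have mt : monotone (fun i => x i + t * (z i - x i)).
    by move=> i j ij; have := mx i j ij; have := mz i j ij; nra.
  have := opt _ mt; rewrite /sqdist.
  have -> : \sum_i (y i - (x i + t * (z i - x i))) ^+ 2 =
            \sum_i (y i - x i) ^+ 2 - t * (2 * A) + t * (t * B).
    rewrite /A /B !mulr_sumr -sumrB -big_split /=.
    by apply: eq_bigr => i _; ring.
  move=> h; have : t * (2 * A) <= t * (t * B) by lra.
  by rewrite ler_pM2l.
rewrite leNgt; apply/negP => A0.
have AB : 0 < A + B by lra.
have tAB : A / (A + B) * (A + B) = A by rewrite mulfVK // gt_eqF.
have t1 : A / (A + B) <= 1 by rewrite ler_pdivrMr // mul1r; lra.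
have := dir_ineq _ (divr_gt0 A0 AB) t1; nra.
Qed.

Section SubsetIndexing.
Variables (n : nat) (T : {set 'I_n}).

Lemma ltn_enum_val (i j : 'I_#|T|) :
  (enum_val i < enum_val j)%N = (i < j)%N.
Proof.
have sortedT : sorted (relpre val ltn) (enum T).
  apply: sorted_filter; first by move=> a b c /=; exact: ltn_trans.
  by rewrite -enumT -sorted_map val_enum_ord; exact: iota_ltn_sorted.
have lt_mono (a b : 'I_#|T|) : (a < b)%N -> (enum_val a < enum_val b)%N.
  move=> ab; rewrite (enum_val_nth (enum_val a) a) (enum_val_nth (enum_val a) b).
  have trans : transitive (relpre (val : 'I_n -> nat) ltn).
    by move=> p q r /=; exact: ltn_trans.
  by apply: (sorted_ltn_nth trans) => //; rewrite inE -cardE.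
apply/idP/idP; last exact: lt_mono.
case: (ltngtP i j) => // [/lt_mono ji|/val_inj ->]; last by rewrite ltnn.
by rewrite ltnNge ltnW.
Qed.

Lemma leq_enum_val (i j : 'I_#|T|) :
  (enum_val i <= enum_val j)%N = (i <= j)%N.
Proof. by rewrite leqNgt ltn_enum_val -leqNgt. Qed.

Lemma exists_enum_val k : k \in T -> exists l : 'I_#|T|, k = enum_val l.
Proof. by move=> kT; exists (enum_rank_in kT k); rewrite enum_rankK_in. Qed.

(* Summing over the fibre of [enum_val] avoids needing a default element of T. *)
Definition zero_ext (V : nmodType) (G : 'I_#|T| -> V) (k : 'I_n) : V :=
  \sum_(l | enum_val l == k) G l.

Lemma zero_ext_enum_val (V : nmodType) (G : 'I_#|T| -> V) l :
  zero_ext G (enum_val l) = G l.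
Proof. by rewrite /zero_ext (big_pred1 l) // => l'; rewrite /= (inj_eq enum_val_inj). Qed.

Lemma zero_ext_notin (V : nmodType) (G : 'I_#|T| -> V) k :
  k \notin T -> zero_ext G k = 0.
Proof.
move=> kT; rewrite /zero_ext big_pred0 // => l.
by apply: contraNF kT => /eqP <-; exact: enum_valP.
Qed.

Lemma zero_ext_ge0 (R : numDomainType) (G : 'I_#|T| -> R) k :
  (forall l, 0 <= G l) -> 0 <= zero_ext G k.
Proof. by move=> G0; apply: sumr_ge0. Qed.

Lemma zero_ext_opp (V : zmodType) (G : 'I_#|T| -> V) k :
  zero_ext (fun l => - G l) k = - zero_ext G k.
Proof. exact: sumrN. Qed.

Lemma sum_mul_zero_ext (R : pzSemiRingType) (F : 'I_n -> R) (G : 'I_#|T| -> R) :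
  \sum_k F k * zero_ext G k = \sum_l F (enum_val l) * G l.
Proof.
under eq_bigr do rewrite mulr_sumr.
rewrite (exchange_big_dep xpredT) //=; apply: eq_bigr => l _.
by rewrite (big_pred1 (enum_val l)) // => k; rewrite /= eq_sym.
Qed.

End SubsetIndexing.

Lemma monotone_eq_of_adjacent (R : realFieldType) (U : Type) m
  (f : 'I_m -> U) (g : 'I_m -> R) :
  monotone g ->
  (forall i j : 'I_m, j = i.+1 :> nat -> g i = g j -> f i = f j) ->
  forall i j, g i = g j -> f i = f j.
Proof.
move=> mg adj.
suff up d (i j : 'I_m) : j = (i + d)%N :> nat -> g i = g j -> f i = f j.
  move=> i j; case: (leqP i j) => [ij|/ltnW ji] gij.
    by apply: (up (j - i)%N) => //; rewrite subnKC.
  by symmetry; apply: (up (i - j)%N) => //; rewrite subnKC.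
elim: d i j => [|d IH] i j e gij.
  by have -> : j = i by apply: val_inj; rewrite /= e addn0.
have lt_im : (i.+1 < m)%N.
  by rewrite (leq_ltn_trans _ (ltn_ord j)) // e addnS ltnS leq_addr.
pose k := Ordinal lt_im.
have gik : g i = g k.
  apply/le_anti/andP; split; first exact: mg.
  by rewrite gij; apply: mg; rewrite /= e addnS ltnS leq_addr.
rewrite (adj i k) //; apply: IH; first by rewrite e /= addSnnS.
by rewrite -gik.
Qed.

Lemma size_undup_map_le (I S : eqType) (g h : I -> S) (s : seq I) :
  (forall a b, h a = h b -> g a = g b) ->
  (size (undup (map g s)) <= size (undup (map h s)))%N.
Proof.
move=> gh; elim: s => //= a s IH.
case: ifP => ga; case: ifP => ha /=.
- exact: IH.
- exact: leqW.
- by move/mapP: ha => [b bs hb]; rewrite (gh _ _ hb) map_f in ga.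
- by rewrite ltnS.
Qed.

Lemma kdist_le_of_fibers (R : realFieldType) m (u v : 'I_m -> R) :
  (forall i j, v i = v j -> u i = u j) -> (kdist u <= kdist v)%N.
Proof. by move=> uv; rewrite /kdist !codomE; exact: size_undup_map_le. Qed.

Lemma kdist_le_sum_partition (R : realFieldType) n (x : 'I_n -> R)
  (P : {set {set 'I_n}}) :
  partition P [set: 'I_n] -> (kdist x <= \sum_(T in P) kdist (subvec x T))%N.
Proof.
move=> hP; rewrite /kdist.
set s := flatten [seq undup (codom (subvec x T)) | T in P].
have sub : {subset undup (codom x) <= s}.
  move=> v; rewrite mem_undup => /codomP [k ->].
  have kP : k \in cover P by rewrite (cover_partition hP) inE.
  have kblock : k \in pblock P k by rewrite mem_pblock.
  apply/flatten_imageP; exists (pblock P k); first exact: pblock_mem.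
  rewrite mem_undup; apply/codomP; exists (enum_rank_in kblock k).
  by rewrite /subvec enum_rankK_in.
apply: leq_trans (uniq_leq_size (undup_uniq _) sub) _.
by rewrite /s size_flatten /shape -map_comp sumnE big_map big_enum.
Qed.

Section Truncation.
Variables (R : realFieldType) (m : nat) (w : 'I_m -> R) (b : R).

Definition raise_after (i l : 'I_m) : R :=
  if (i < l)%N && (w l < b) then b - w l else 0.

Definition lower_before (j l : 'I_m) : R :=
  if (l < j)%N && (b < w l) then w l - b else 0.

Lemma raise_after_ge0 i l : 0 <= raise_after i l.
Proof. by rewrite /raise_after; case: ifP => [/andP[_ wl]|_]; lra. Qed.

Lemma lower_before_ge0 j l : 0 <= lower_before j l.
Proof. by rewrite /lower_before; case: ifP => [/andP[_ wl]|_]; lra. Qed.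

Lemma raise_after_eq0 (i l : 'I_m) : (l <= i)%N -> raise_after i l = 0.
Proof. by rewrite /raise_after leqNgt => /negbTE ->. Qed.

Lemma lower_before_eq0 (j l : 'I_m) : (j <= l)%N -> lower_before j l = 0.
Proof. by rewrite /lower_before leqNgt => /negbTE ->. Qed.

Hypothesis mw : monotone w.

Lemma raise_after_antitone (i l1 l2 : 'I_m) :
  (i < l1)%N -> (l1 <= l2)%N -> raise_after i l2 <= raise_after i l1.
Proof.
move=> il1 l12; have := mw l12.
rewrite /raise_after il1 (leq_trans il1 l12) /=.
by case: (ltP (w l1) b) => h1; case: (ltP (w l2) b) => h2 /=; lra.
Qed.

Lemma lower_before_monotone (j l1 l2 : 'I_m) :
  (l1 <= l2)%N -> (l2 < j)%N -> lower_before j l1 <= lower_before j l2.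
Proof.
move=> l12 l2j; have := mw l12.
rewrite /lower_before l2j (leq_ltn_trans l12 l2j) /=.
by case: (ltP b (w l1)) => h1; case: (ltP b (w l2)) => h2 /=; lra.
Qed.

Lemma monotone_add_raise_after i : monotone (fun l => w l + raise_after i l).
Proof.
move=> l1 l2 l12 /=; have := mw l12; have [l1i|il1] := leqP l1 i.
  by rewrite raise_after_eq0 // addr0; have := raise_after_ge0 i l2; lra.
rewrite /raise_after il1 (leq_trans il1 l12) /=.
by case: (ltP (w l1) b) => h1; case: (ltP (w l2) b) => h2 /=; lra.
Qed.

Lemma monotone_sub_lower_before j : monotone (fun l => w l - lower_before j l).
Proof.
move=> l1 l2 l12 /=; have := mw l12; have [jl2|l2j] := leqP j l2.
  by rewrite (lower_before_eq0 jl2) subr0; have := lower_before_ge0 j l1; lra.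
rewrite /lower_before l2j (leq_ltn_trans l12 l2j) /=.
by case: (ltP b (w l1)) => h1; case: (ltP b (w l2)) => h2 /=; lra.
Qed.

End Truncation.

Section MonotonePerturbation.
Variables (R : realFieldType) (n : nat) (x : 'I_n -> R) (T : {set 'I_n}).
Hypotheses (hT : consecutive T) (mx : monotone x).

Lemma monotone_sub_zero_ext (i : 'I_#|T|) (c : R) (G : 'I_#|T| -> R) :
  0 <= c -> (forall l, 0 <= G l) ->
  (forall l : 'I_#|T|, (l <= i)%N -> G l = 0) ->
  (forall l1 l2 : 'I_#|T|, (i < l1)%N -> (l1 <= l2)%N -> G l2 <= G l1) ->
  (forall l : 'I_#|T|, (i < l)%N -> x (enum_val i) + c * G l <= x (enum_val l)) ->
  monotone (fun k => x k - c * zero_ext G k).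
Proof.
move=> c0 G0 G_lo G_anti G_bound k1 k2 k12.
have h0 k : 0 <= c * zero_ext G k by rewrite mulr_ge0 ?zero_ext_ge0.
have [/exists_enum_val [l2 e2]|k2T] := boolP (k2 \in T); last first.
  by rewrite (zero_ext_notin _ k2T) mulr0 subr0; have := mx k12; have := h0 k1; lra.
subst k2; rewrite zero_ext_enum_val; have [/G_lo ->|il2] := leqP l2 i.
  by rewrite mulr0 subr0; have := mx k12; have := h0 k1; lra.
have [k1i|ik1] := leqP k1 (enum_val i).
  have -> : zero_ext G k1 = 0.
    have [/exists_enum_val [l1 e1]|/zero_ext_notin -> //] := boolP (k1 \in T).
    by rewrite e1 zero_ext_enum_val G_lo // -leq_enum_val -e1.
  by rewrite mulr0 subr0; have := mx k1i; have := G_bound _ il2; lra.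
have k1T : k1 \in T := hT (enum_valP i) (enum_valP l2) (ltnW ik1) k12.
have [l1 e1] := exists_enum_val k1T.
rewrite e1 zero_ext_enum_val in k12 *.
have il1 : (i < l1)%N by rewrite -ltn_enum_val -e1.
have l12 : (l1 <= l2)%N by rewrite -leq_enum_val.
have := mx k12; have : c * G l2 <= c * G l1 by rewrite ler_wpM2l // G_anti.
lra.
Qed.

Lemma monotone_add_zero_ext (j : 'I_#|T|) (c : R) (G : 'I_#|T| -> R) :
  0 <= c -> (forall l, 0 <= G l) ->
  (forall l : 'I_#|T|, (j <= l)%N -> G l = 0) ->
  (forall l1 l2 : 'I_#|T|, (l1 <= l2)%N -> (l2 < j)%N -> G l1 <= G l2) ->
  (forall l : 'I_#|T|, (l < j)%N -> x (enum_val l) + c * G l <= x (enum_val j)) ->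
  monotone (fun k => x k + c * zero_ext G k).
Proof.
move=> c0 G0 G_hi G_mono G_bound k1 k2 k12.
have h0 k : 0 <= c * zero_ext G k by rewrite mulr_ge0 ?zero_ext_ge0.
have [/exists_enum_val [l1 e1]|k1T] := boolP (k1 \in T); last first.
  by rewrite (zero_ext_notin _ k1T) mulr0 addr0; have := mx k12; have := h0 k2; lra.
subst k1; rewrite zero_ext_enum_val; have [/G_hi ->|l1j] := leqP j l1.
  by rewrite mulr0 addr0; have := mx k12; have := h0 k2; lra.
have [jk2|k2j] := leqP (enum_val j) k2.
  by have := mx jk2; have := h0 k2; have := G_bound _ l1j; lra.
have k2T : k2 \in T := hT (enum_valP l1) (enum_valP j) k12 (ltnW k2j).
have [l2 e2] := exists_enum_val k2T.
rewrite e2 zero_ext_enum_val in k12 k2j *.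
have l2j : (l2 < j)%N by rewrite -ltn_enum_val.
have l12 : (l1 <= l2)%N by rewrite -leq_enum_val.
have := mx k12; have : c * G l1 <= c * G l2 by rewrite ler_wpM2l // G_mono.
lra.
Qed.

End MonotonePerturbation.

Section BlockProjection.
Variables (R : realFieldType) (n : nat) (y x : 'I_n -> R) (T : {set 'I_n}).
Hypotheses (hT : consecutive T) (hx : is_proj_mono y x).
Variable w : 'I_#|T| -> R.
Hypothesis hw : is_proj_mono (subvec y T) w.

Lemma proj_block_cross_ge0 (c : R) (G : 'I_#|T| -> R) :
  0 < c -> monotone (fun l => w l + G l) ->
  monotone (fun k => x k - c * zero_ext G k) ->
  0 <= \sum_l (w l - x (enum_val l)) * G l.
Proof.
move=> c0 mwG mxG.
have vw := proj_mono_variational_ineq hw mwG.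
have vx := proj_mono_variational_ineq hx mxG.
set Sw := \sum_l (subvec y T l - w l) * G l.
set Sx := \sum_l (subvec y T l - x (enum_val l)) * G l.
have Ew : \sum_l (subvec y T l - w l) * (w l + G l - w l) = Sw.
  by apply: eq_bigr => l _; rewrite addrAC subrr add0r.
have Ex : \sum_k (y k - x k) * (x k - c * zero_ext G k - x k) = - c * Sx.
  rewrite /Sx -(sum_mul_zero_ext (fun k => y k - x k)) mulr_sumr.
  by apply: eq_bigr => k _; ring.
have Sx_ge0 : 0 <= Sx by rewrite -(pmulr_rge0 _ c0); lra.
have -> : \sum_l (w l - x (enum_val l)) * G l = Sx - Sw.
  by rewrite -sumrB; apply: eq_bigr => l _; ring.
lra.
Qed.

Lemma proj_block_jump_le_next (i j : 'I_#|T|) :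
  j = i.+1 :> nat -> x (enum_val i) < x (enum_val j) -> x (enum_val j) <= w j.
Proof.
move=> ji xij; rewrite leNgt; apply/negP => wj_lt; have mw := hw.1.
have ij : (i < j)%N by rewrite ji.
have x_after (l : 'I_#|T|) : (i < l)%N -> x (enum_val j) <= x (enum_val l).
  by move=> il; apply: hx.1; rewrite leq_enum_val ji.
set mid := (w j + x (enum_val j)) / 2.
have [wj_mid mid_xj] : w j < mid /\ mid < x (enum_val j) by rewrite /mid; split; lra.
pose G := raise_after w mid i.
have G_le l : G l <= mid - w j.
  rewrite /G /raise_after; case: ifP => [/andP[il _]|_]; last by lra.
  have : w j <= w l by apply: mw; rewrite ji.
  lra.
set c := (x (enum_val j) - x (enum_val i)) / (mid - w j).
have c0 : 0 < c by rewrite divr_gt0 ?subr_gt0.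
have c_mid : c * (mid - w j) = x (enum_val j) - x (enum_val i).
  by rewrite mulfVK // gt_eqF // subr_gt0.
have G_bound (l : 'I_#|T|) : (i < l)%N -> x (enum_val i) + c * G l <= x (enum_val l).
  move=> il; have := x_after l il.
  have : c * G l <= c * (mid - w j) by rewrite ler_wpM2l // ltW.
  lra.
have := proj_block_cross_ge0 c0 (monotone_add_raise_after mid mw i)
  (monotone_sub_zero_ext hT hx.1 (ltW c0) (raise_after_ge0 w mid i)
     (@raise_after_eq0 _ _ w mid i) (raise_after_antitone (i:=i) mid mw) G_bound).
apply/negP; rewrite -ltNge (bigD1 j) //= -/G.
have rest : \sum_(l | l != j) (w l - x (enum_val l)) * G l <= 0.
  apply: sumr_le0 => l _; rewrite /G /raise_after.
  case: ifP => [/andP[il wl]|_]; last by rewrite mulr0.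
  by have := x_after l il; nra.
have : (w j - x (enum_val j)) * G j < 0 by rewrite /G /raise_after ij wj_mid /=; nra.
lra.
Qed.

Lemma proj_block_jump_ge_prev (i j : 'I_#|T|) :
  j = i.+1 :> nat -> x (enum_val i) < x (enum_val j) -> w i <= x (enum_val i).
Proof.
move=> ji xij; rewrite leNgt; apply/negP => xi_lt; have mw := hw.1.
have lej (l : 'I_#|T|) : (l < j)%N = (l <= i)%N by rewrite ji.
have x_before (l : 'I_#|T|) : (l < j)%N -> x (enum_val l) <= x (enum_val i).
  by rewrite lej => li; apply: hx.1; rewrite leq_enum_val.
set mid := (x (enum_val i) + w i) / 2.
have [xi_mid mid_wi] : x (enum_val i) < mid /\ mid < w i by rewrite /mid; split; lra.
pose G := lower_before w mid j.
have G_le l : G l <= w i - mid.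
  rewrite /G /lower_before; case: ifP => [/andP[lj _]|_]; last by lra.
  have : w l <= w i by apply: mw; rewrite -lej.
  lra.
set c := (x (enum_val j) - x (enum_val i)) / (w i - mid).
have c0 : 0 < c by rewrite divr_gt0 ?subr_gt0.
have c_mid : c * (w i - mid) = x (enum_val j) - x (enum_val i).
  by rewrite mulfVK // gt_eqF // subr_gt0.
have G_bound (l : 'I_#|T|) : (l < j)%N -> x (enum_val l) + c * G l <= x (enum_val j).
  move=> lj; have := x_before l lj.
  have : c * G l <= c * (w i - mid) by rewrite ler_wpM2l // ltW.
  lra.
have mxG : monotone (fun k => x k - c * zero_ext (fun l => - G l) k).
  move=> k1 k2 k12 /=; rewrite !zero_ext_opp !mulrN !opprK.
  exact: (monotone_add_zero_ext hT hx.1 (ltW c0) (lower_before_ge0 w mid j)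
    (@lower_before_eq0 _ _ w mid j) (lower_before_monotone (j:=j) mid mw) G_bound).
have := proj_block_cross_ge0 c0 (monotone_sub_lower_before mid mw j) mxG.
apply/negP; rewrite -ltNge (bigD1 i) //= -/G.
have rest : \sum_(l | l != i) (w l - x (enum_val l)) * - G l <= 0.
  apply: sumr_le0 => l _; rewrite /G /lower_before.
  case: ifP => [/andP[lj wl]|_]; last by rewrite oppr0 mulr0.
  by have := x_before l lj; nra.
have ij : (i < j)%N by rewrite ji.
have : (w i - x (enum_val i)) * - G i < 0.
  by rewrite /G /lower_before ij mid_wi /=; nra.
lra.
Qed.

Lemma proj_block_adjacent (i j : 'I_#|T|) :
  j = i.+1 :> nat -> w i = w j -> x (enum_val i) = x (enum_val j).
Proof.
move=> ji wij; have : x (enum_val i) <= x (enum_val j).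
  by apply: hx.1; rewrite leq_enum_val ji.
rewrite le_eqVlt => /orP[/eqP //|xij].
have := proj_block_jump_le_next ji xij; have := proj_block_jump_ge_prev ji xij.
lra.
Qed.

Lemma kdist_subvec_le_proj_block : (kdist (subvec x T) <= kdist w)%N.
Proof.
apply: kdist_le_of_fibers; apply: monotone_eq_of_adjacent hw.1 _.
exact: proj_block_adjacent.
Qed.

End BlockProjection.

Theorem mainTheorem5 (R : realFieldType) (n : nat) (hn : (0 < n)%N)
  (y : 'I_n -> R) (P : {set {set 'I_n}})
  (hP : partition P [set: 'I_n])
  (hcons : forall T, T \in P -> consecutive T)
  (x : 'I_n -> R) (hx : is_proj_mono y x)
  (xs : forall T : {set 'I_n}, 'I_#|T| -> R)
  (hxs : forall T, T \in P -> is_proj_mono (subvec y T) (xs T)) :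
  (kdist x <= \sum_(T in P) kdist (xs T))%N.
Proof.
apply: leq_trans (kdist_le_sum_partition x hP) _.
apply: leq_sum => T TP.
exact: (kdist_subvec_le_proj_block (hcons T TP) hx (hxs T TP)).
Qed.
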